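(* Let $p\geq 2$ be an integer. Then $\mathcal{M}_3^p=\mathcal{M}_2^p\times_{\gamma_2}\mathcal{M}_2^p$; that is, $c=c_1+c_2\mathbf{i_3}\in\mathbb{M}(3)$ (with $c_1,c_2\in\mathbb{M}(2)$) lies in $\mathcal{M}_3^p$ if and only if both $c_1-c_2\mathbf{i_2}\in\mathcal{M}_2^p$ and $c_1+c_2\mathbf{i_2}\in\mathcal{M}_2^p$.
   Context: The tricomplex numbers $\mathbb{M}(3)$ form the commutative real algebra generated by commuting units $\mathbf{i_1},\mathbf{i_2},\mathbf{i_3}$ with $\mathbf{i_k}^2=-1$; set $\mathbf{j_1}=\mathbf{i_1}\mathbf{i_2}$, $\mathbf{j_2}=\mathbf{i_1}\mathbf{i_3}$, $\mathbf{j_3}=\mathbf{i_2}\mathbf{i_3}$, $\mathbf{i_4}=\mathbf{i_1}\mathbf{i_2}\mathbf{i_3}$. It has real basis $1,\mathbf{i_1},\mathbf{i_2},\mathbf{i_3},\mathbf{i_4},\mathbf{j_1},\mathbf{j_2},\mathbf{j_3}$ and norm $\|\cdot\|_3$ equal to the Euclidean norm of the 8 real coordinates. The bicomplex numbers $\mathbb{M}(2)$ are the subalgebra spanned by $1,\mathbf{i_1},\mathbf{i_2},\mathbf{j_1}$, with norm $\|\cdot\|_2$ the Euclidean norm of its 4 coordinates; every $\eta\in\mathbb{M}(3)$ is uniquely $\zeta_1+\zeta_2\mathbf{i_3}$ with $\zeta_1,\zeta_2\in\mathbb{M}(2)$. With $\gamma_2=\frac{1+\mathbf{j_3}}{2}$,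 $\overline{\gamma}_2=\frac{1-\mathbf{j_3}}{2}$, one has $\eta=(\zeta_1-\zeta_2\mathbf{i_2})\gamma_2+(\zeta_1+\zeta_2\mathbf{i_2})\overline{\gamma}_2$. For $X_1,X_2\subseteq\mathbb{M}(2)$, $X_1\times_{\gamma_2}X_2=\{u_1\gamma_2+u_2\overline{\gamma}_2 : u_1\in X_1,u_2\in X_2\}$. For $n\in\{2,3\}$ and $c\in\mathbb{M}(n)$, $Q_{p,c}(\eta)=\eta^p+c$, $Q_{p,c}^m$ its $m$-fold iterate, and $\mathcal{M}_n^p=\{c\in\mathbb{M}(n) : (Q_{p,c}^m(0))_{m\geq1}\text{ is bounded in }\|\cdot\|_n\}$. *)

From Stdlib Require Import Reals.
Open Scope R_scope.

(** Bicomplex numbers M(2): a + b i1 + c i2 + d j1, with j1 = i1 i2. *)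
Record M2 := mkM2 { re2 : R; i1c : R; i2c : R; j1c : R }.

Definition M2add (x y : M2) : M2 :=
  mkM2 (re2 x + re2 y) (i1c x + i1c y) (i2c x + i2c y) (j1c x + j1c y).
Definition M2opp (x : M2) : M2 :=
  mkM2 (- re2 x) (- i1c x) (- i2c x) (- j1c x).
Definition M2sub (x y : M2) : M2 := M2add x (M2opp y).
(* product using i1^2 = i2^2 = -1, i1 i2 = i2 i1 = j1 *)
Definition M2mul (x y : M2) : M2 :=
  let a := re2 x in let b := i1c x in let c := i2c x in let d := j1c x in
  let e := re2 y in let f := i1c y in let g := i2c y in let h := j1c y in
  mkM2 (a*e - b*f - c*g + d*h)
       (a*f + b*e - c*h - d*g)
       (a*g + c*e - b*h - d*f)
       (a*h + d*e + b*g + c*f).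
Definition M2zero : M2 := mkM2 0 0 0 0.
Definition M2one : M2 := mkM2 1 0 0 0.
Definition M2_i2 : M2 := mkM2 0 0 1 0.
Fixpoint M2pow (x : M2) (n : nat) : M2 :=
  match n with O => M2one | S k => M2mul x (M2pow x k) end.
Definition norm2 (x : M2) : R :=
  sqrt (re2 x ^ 2 + i1c x ^ 2 + i2c x ^ 2 + j1c x ^ 2).

(** Tricomplex numbers M(3): eta = z1 + z2 i3 with z1, z2 in M(2),
    i3 commuting with M(2) and i3^2 = -1. *)
Record M3 := mkM3 { fst3 : M2; snd3 : M2 }.

Definition M3add (x y : M3) : M3 :=
  mkM3 (M2add (fst3 x) (fst3 y)) (M2add (snd3 x) (snd3 y)).
Definition M3mul (x y : M3) : M3 :=
  mkM3 (M2sub (M2mul (fst3 x) (fst3 y)) (M2mul (snd3 x) (snd3 y)))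
       (M2add (M2mul (fst3 x) (snd3 y)) (M2mul (snd3 x) (fst3 y))).
Definition M3zero : M3 := mkM3 M2zero M2zero.
Definition M3one : M3 := mkM3 M2one M2zero.
Fixpoint M3pow (x : M3) (n : nat) : M3 :=
  match n with O => M3one | S k => M3mul x (M3pow x k) end.
(* Euclidean norm of the 8 real coordinates w.r.t. 1,i1,i2,j1,i3,j2,j3,i4 *)
Definition norm3 (x : M3) : R :=
  sqrt (re2 (fst3 x) ^ 2 + i1c (fst3 x) ^ 2 + i2c (fst3 x) ^ 2 + j1c (fst3 x) ^ 2
      + re2 (snd3 x) ^ 2 + i1c (snd3 x) ^ 2 + i2c (snd3 x) ^ 2 + j1c (snd3 x) ^ 2).

Definition M2toM3 (u : M2) : M3 := mkM3 u M2zero.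
(* gamma2 = (1 + j3)/2 with j3 = i2 i3 *)
Definition gamma2 : M3 := mkM3 (mkM2 (1/2) 0 0 0) (mkM2 0 0 (1/2) 0).
Definition gamma2bar : M3 := mkM3 (mkM2 (1/2) 0 0 0) (mkM2 0 0 (-(1/2)) 0).

Fixpoint Q2iter (p : nat) (c : M2) (m : nat) : M2 :=
  match m with O => M2zero | S k => M2add (M2pow (Q2iter p c k) p) c end.
Fixpoint Q3iter (p : nat) (c : M3) (m : nat) : M3 :=
  match m with O => M3zero | S k => M3add (M3pow (Q3iter p c k) p) c end.

Definition Mandel2 (p : nat) (c : M2) : Prop :=
  exists B : R, forall m : nat, (1 <= m)%nat -> norm2 (Q2iter p c m) <= B.
Definition Mandel3 (p : nat) (c : M3) : Prop :=
  exists B : R, forall m : nat, (1 <= m)%nat -> norm3 (Q3iter p c m) <= B.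

Definition gamma_prod (X1 X2 : M2 -> Prop) (eta : M3) : Prop :=
  exists u1 u2 : M2, X1 u1 /\ X2 u2 /\
    eta = M3add (M3mul (M2toM3 u1) gamma2) (M3mul (M2toM3 u2) gamma2bar).

(* Writing eta = z1 + z2 i3, the maps eta |-> z1 - z2 i2 and
   eta |-> z1 + z2 i2 evaluate i3 at the two square roots -i2, i2 of -1 in M(2),
   hence are ring homomorphisms M(3) -> M(2); they carry the iteration of
   Q_{p,c} to that of Q_{p,phi(c)}.  Multiplication by i2 is an isometry of
   M(2), so the parallelogram law gives
   |z1 - z2 i2|^2 + |z1 + z2 i2|^2 = 2 |eta|^2: an orbit in M(3) is bounded
   iff both image orbits are.  Finally eta = phi1(eta) gamma2 + phi2(eta)
   gamma2bar, and the two components of such a combination are recovered by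
   phi1 and phi2. *)
From Stdlib Require Import Reals Lra.
Open Scope R_scope.

Lemma M2_ext (x y : M2) :
  re2 x = re2 y -> i1c x = i1c y -> i2c x = i2c y -> j1c x = j1c y -> x = y.
Proof. destruct x, y; simpl; intros; subst; reflexivity. Qed.

Lemma M3_ext (x y : M3) : fst3 x = fst3 y -> snd3 x = snd3 y -> x = y.
Proof. destruct x, y; simpl; intros; subst; reflexivity. Qed.

Ltac by_components :=
  repeat match goal with
  | x : M3 |- _ => destruct x
  | x : M2 |- _ => destruct x
  end;
  try apply M3_ext; apply M2_ext;
  cbv beta iota zeta delta [M3mul M3add M2sub M2add M2opp M2mul M2_i2 M3one M2one
    M3zero M2zero M2toM3 gamma2 gamma2bar fst3 snd3 re2 i1c i2c j1c];
  first [ring | field].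

Lemma M2_ring_theory :
  ring_theory M2zero M2one M2add M2mul M2sub M2opp (@eq M2).
Proof. split; intros; by_components. Qed.

Add Ring M2_ring : M2_ring_theory.

Definition eval_i3 (u : M2) (x : M3) : M2 := M2add (fst3 x) (M2mul (snd3 x) u).

Section EvalI3.

Variable u : M2.
Hypothesis u_sqr : M2mul u u = M2opp M2one.

Lemma eval_i3_add x y : eval_i3 u (M3add x y) = M2add (eval_i3 u x) (eval_i3 u y).
Proof. destruct x as [x1 x2], y as [y1 y2]; unfold eval_i3; simpl; ring. Qed.

Lemma eval_i3_mul x y : eval_i3 u (M3mul x y) = M2mul (eval_i3 u x) (eval_i3 u y).
Proof.
  destruct x as [x1 x2], y as [y1 y2]; unfold eval_i3; simpl.
  transitivity (M2add (M2add (M2mul x1 y1) (M2mul (M2mul x2 y2) (M2mul u u)))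
                      (M2mul (M2add (M2mul x1 y2) (M2mul x2 y1)) u)).
  - rewrite u_sqr; ring.
  - ring.
Qed.

Lemma eval_i3_pow x n : eval_i3 u (M3pow x n) = M2pow (eval_i3 u x) n.
Proof.
  induction n as [|n IHn]; simpl.
  - unfold eval_i3; simpl; ring.
  - rewrite eval_i3_mul, IHn; reflexivity.
Qed.

Lemma eval_i3_Q3iter p c m : eval_i3 u (Q3iter p c m) = Q2iter p (eval_i3 u c) m.
Proof.
  induction m as [|m IHm]; simpl.
  - unfold eval_i3; simpl; ring.
  - rewrite eval_i3_add, eval_i3_pow, IHm; reflexivity.
Qed.

End EvalI3.

Lemma M2_i2_sqr : M2mul M2_i2 M2_i2 = M2opp M2one.
Proof. by_components. Qed.

Lemma M2_i2_opp_sqr : M2mul (M2opp M2_i2) (M2opp M2_i2) = M2opp M2one.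
Proof. rewrite <- M2_i2_sqr; ring. Qed.

Definition phi1 (x : M3) : M2 := M2sub (fst3 x) (M2mul (snd3 x) M2_i2).
Definition phi2 (x : M3) : M2 := M2add (fst3 x) (M2mul (snd3 x) M2_i2).

Lemma phi1_eval_i3 x : phi1 x = eval_i3 (M2opp M2_i2) x.
Proof. unfold phi1, eval_i3; ring. Qed.

Lemma phi1_Q3iter p c m : phi1 (Q3iter p c m) = Q2iter p (phi1 c) m.
Proof. rewrite !phi1_eval_i3; exact (eval_i3_Q3iter _ M2_i2_opp_sqr p c m). Qed.

Lemma phi2_Q3iter p c m : phi2 (Q3iter p c m) = Q2iter p (phi2 c) m.
Proof. exact (eval_i3_Q3iter _ M2_i2_sqr p c m). Qed.

Definition sqnorm2 (x : M2) : R := re2 x ^ 2 + i1c x ^ 2 + i2c x ^ 2 + j1c x ^ 2.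

Lemma sqnorm2_ge0 x : 0 <= sqnorm2 x.
Proof. unfold sqnorm2; nra. Qed.

Lemma norm2_sqnorm2 x : norm2 x = sqrt (sqnorm2 x).
Proof. reflexivity. Qed.

Lemma norm3_sqnorm2 x : norm3 x = sqrt (sqnorm2 (fst3 x) + sqnorm2 (snd3 x)).
Proof. unfold norm3, sqnorm2; f_equal; ring. Qed.

Lemma sqnorm2_mul_i2 x : sqnorm2 (M2mul x M2_i2) = sqnorm2 x.
Proof. destruct x; unfold sqnorm2; simpl; ring. Qed.

Lemma sqnorm2_parallelogram x y :
  sqnorm2 (M2sub x y) + sqnorm2 (M2add x y) = 2 * (sqnorm2 x + sqnorm2 y).
Proof. destruct x, y; unfold sqnorm2; simpl; ring. Qed.

Lemma sqnorm2_phi12 x :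
  sqnorm2 (phi1 x) + sqnorm2 (phi2 x) = 2 * (sqnorm2 (fst3 x) + sqnorm2 (snd3 x)).
Proof. unfold phi1, phi2; rewrite sqnorm2_parallelogram, sqnorm2_mul_i2; reflexivity. Qed.

Lemma sqrt_le_scale U A k : 0 <= A -> 0 <= k -> U <= k ^ 2 * A -> sqrt U <= k * sqrt A.
Proof.
  intros HA Hk H. rewrite <- (sqrt_pow2 k Hk), <- sqrt_mult_alt by nra.
  apply sqrt_le_1_alt; lra.
Qed.

Lemma sqrt_le_add_sqrt A B C :
  0 <= B -> 0 <= C -> A <= B + C -> sqrt A <= sqrt B + sqrt C.
Proof.
  intros HB HC H.
  pose proof (sqrt_pos B); pose proof (sqrt_pos C).
  pose proof (sqrt_sqrt B HB); pose proof (sqrt_sqrt C HC).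
  rewrite <- (sqrt_pow2 (sqrt B + sqrt C)) by lra.
  apply sqrt_le_1_alt; nra.
Qed.

Lemma norm2_phi1_le x : norm2 (phi1 x) <= 2 * norm3 x.
Proof.
  pose proof (sqnorm2_phi12 x); pose proof (sqnorm2_ge0 (phi2 x)).
  pose proof (sqnorm2_ge0 (fst3 x)); pose proof (sqnorm2_ge0 (snd3 x)).
  rewrite norm2_sqnorm2, norm3_sqnorm2; apply sqrt_le_scale; lra.
Qed.

Lemma norm2_phi2_le x : norm2 (phi2 x) <= 2 * norm3 x.
Proof.
  pose proof (sqnorm2_phi12 x); pose proof (sqnorm2_ge0 (phi1 x)).
  pose proof (sqnorm2_ge0 (fst3 x)); pose proof (sqnorm2_ge0 (snd3 x)).
  rewrite norm2_sqnorm2, norm3_sqnorm2; apply sqrt_le_scale; lra.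
Qed.

Lemma norm3_le_phi12 x : norm3 x <= norm2 (phi1 x) + norm2 (phi2 x).
Proof.
  pose proof (sqnorm2_phi12 x); pose proof (sqnorm2_ge0 (phi1 x)).
  pose proof (sqnorm2_ge0 (phi2 x)); pose proof (sqnorm2_ge0 (fst3 x)).
  pose proof (sqnorm2_ge0 (snd3 x)).
  rewrite !norm2_sqnorm2, norm3_sqnorm2; apply sqrt_le_add_sqrt; lra.
Qed.

Lemma Mandel3_phi12 p c : Mandel3 p c <-> Mandel2 p (phi1 c) /\ Mandel2 p (phi2 c).
Proof.
  split.
  - intros [B HB]; split; exists (2 * B); intros m Hm.
    + rewrite <- phi1_Q3iter; pose proof (norm2_phi1_le (Q3iter p c m)).
      specialize (HB m Hm); lra.
    + rewrite <- phi2_Q3iter; pose proof (norm2_phi2_le (Q3iter p c m)).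
      specialize (HB m Hm); lra.
  - intros [[B1 H1] [B2 H2]]; exists (B1 + B2); intros m Hm.
    pose proof (norm3_le_phi12 (Q3iter p c m)) as Hle.
    rewrite phi1_Q3iter, phi2_Q3iter in Hle.
    specialize (H1 m Hm); specialize (H2 m Hm); lra.
Qed.

Definition gamma_comb (u1 u2 : M2) : M3 :=
  M3add (M3mul (M2toM3 u1) gamma2) (M3mul (M2toM3 u2) gamma2bar).

Lemma gamma_comb_phi12 x : x = gamma_comb (phi1 x) (phi2 x).
Proof. unfold gamma_comb, phi1, phi2; by_components. Qed.

Lemma phi1_gamma_comb u1 u2 : phi1 (gamma_comb u1 u2) = u1.
Proof. unfold gamma_comb, phi1; by_components. Qed.

Lemma phi2_gamma_comb u1 u2 : phi2 (gamma_comb u1 u2) = u2.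
Proof. unfold gamma_comb, phi2; by_components. Qed.

Theorem mainTheorem12 (p : nat) (hp : (2 <= p)%nat) :
  (forall c : M3, Mandel3 p c <-> gamma_prod (Mandel2 p) (Mandel2 p) c) /\
  (forall c1 c2 : M2,
     Mandel3 p (mkM3 c1 c2) <->
     (Mandel2 p (M2sub c1 (M2mul c2 M2_i2)) /\
      Mandel2 p (M2add c1 (M2mul c2 M2_i2)))).
Proof.
  split.
  - intros c; rewrite Mandel3_phi12; split.
    + intros [H1 H2]; exists (phi1 c), (phi2 c); repeat split; auto.
      apply gamma_comb_phi12.
    + intros [u1 [u2 [H1 [H2 ->]]]].
      fold (gamma_comb u1 u2); rewrite phi1_gamma_comb, phi2_gamma_comb; auto.
  - intros c1 c2; apply Mandel3_phi12.
Qed.
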